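(* For any $v_{t-1},v_t,m_{t-1},m_t\in[0,1]$, \[ |m_t-m_{t-1}|\le 2\sup_{b\in[0,1]}\left|r(b;v_t,m_t)-r(b;v_{t-1},m_{t-1})\right|, \] where $r(b;v,m)\coloneqq (v-b)\cdot\mathbbm{1}(b\ge m)$.
   Context: $\mathbbm{1}(\cdot)$ denotes the indicator function. $r(b;v,m)$ is the reward in a first-price auction of a bidder with value $v$ who bids $b$ when the highest competing bid is $m$. *)

From HB Require Import structures.
From mathcomp Require Import all_boot all_order all_algebra.
From mathcomp Require Import all_classical all_reals.
Set Implicit Arguments. Unset Strict Implicit. Unset Printing Implicit Defensive.
Import Order.TTheory GRing.Theory Num.Theory.
Local Open Scope ring_scope.

Definition reward (R : realType) (b v m : R) : R := (v - b) * ((m <= b)%R)%:R.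

From HB Require Import structures.
From mathcomp Require Import all_boot all_order all_algebra.
From mathcomp Require Import all_classical all_reals.
From mathcomp Require Import lra.
Set Implicit Arguments. Unset Strict Implicit. Unset Printing Implicit Defensive.
Import Order.TTheory GRing.Theory Num.Theory.
Local Open Scope classical_set_scope.
Local Open Scope ring_scope.

(* Say m_prev < m_t and let S be the supremum.  For every bid b in
   [m_prev, m_t) the bidder wins only in the earlier round, so the reward
   difference is |v_prev - b| <= S.  Since b - m_prev <= |v_prev - m_prev| +
   |v_prev - b| <= 2 S for all such b, the interval has length at most 2 S. *)

Section Reward.
Variable R : realType.
Implicit Types b v m : R.

Lemma reward_lt b v m : b < m -> reward b v m = 0.
Proof. by rewrite /reward ltNge => /negbTE ->; rewrite mulr0. Qed.

Lemma reward_ge b v m : m <= b -> reward b v m = v - b.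
Proof. by rewrite /reward => ->; rewrite mulr1. Qed.

Lemma norm_reward_le1 b v m :
  b \in `[0, 1] -> v \in `[0, 1] -> `|reward b v m| <= 1.
Proof.
rewrite !in_itv /= => /andP[b0 b1] /andP[v0 v1].
have [mb | bm] := leP m b; last by rewrite reward_lt ?normr0.
by rewrite reward_ge // ler_norml; apply/andP; split; lra.
Qed.

End Reward.

Lemma ler_of_lt_itv (R : realFieldType) (m1 m2 c : R) :
  m1 < m2 -> (forall b, m1 <= b < m2 -> b <= c) -> m2 <= c.
Proof.
move=> m12 le_c; apply/ler_addgt0Pr => e e_gt0.
have b_itv : m1 <= Num.max m1 (m2 - e) < m2.
  by rewrite le_max lexx gt_max m12 /= gtrBl.
by rewrite -lerBlDr (le_trans _ (le_c _ b_itv)) // le_max lexx orbT.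
Qed.

Lemma itv_length_le_twice_dist (R : realFieldType) (v m1 m2 S : R) :
  m1 < m2 -> (forall b, m1 <= b < m2 -> `|v - b| <= S) -> m2 - m1 <= 2 * S.
Proof.
move=> m12 near_v.
have vm1 : `|v - m1| <= S by apply: near_v; rewrite lexx m12.
rewrite lerBlDl; apply: (ler_of_lt_itv m12) => b /andP[m1b bm2].
have vb : `|v - b| <= S by apply: near_v; rewrite m1b bm2.
have := ler_distD v b m1; rewrite (distrC b v) ger0_norm ?subr_ge0 //; lra.
Qed.

Lemma reserve_gap_lt (R : realType) (v1 v2 m1 m2 S : R) :
  0 <= m1 -> m1 < m2 -> m2 <= 1 ->
  (forall b : R, b \in `[0, 1] -> `|reward b v2 m2 - reward b v1 m1| <= S) ->
  m2 - m1 <= 2 * S.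
Proof.
move=> m1_ge0 m12 m2_le1 dev; apply: (itv_length_le_twice_dist (v := v1) m12).
move=> b /andP[m1b bm2]; have := dev b; rewrite reward_lt // reward_ge //.
by rewrite sub0r normrN; apply; rewrite in_itv /=; apply/andP; split; lra.
Qed.

Lemma reserve_gap_le (R : realType) (v1 v2 m1 m2 S : R) :
  m1 \in `[0, 1] -> m2 \in `[0, 1] ->
  (forall b : R, b \in `[0, 1] -> `|reward b v2 m2 - reward b v1 m1| <= S) ->
  `|m2 - m1| <= 2 * S.
Proof.
rewrite !in_itv /= => /andP[m1_ge0 m1_le1] /andP[m2_ge0 m2_le1] dev.
have [m12 | m21 | <-] := ltgtP m1 m2.
- by rewrite gtr0_norm ?subr_gt0 //; apply: reserve_gap_lt dev.
- rewrite ltr0_norm ?subr_lt0 // opprB.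
  apply: (@reserve_gap_lt _ v2 v1) m21 _ _ => // b.
  by rewrite distrC => /dev.
- have S_ge0 : 0 <= S by apply: le_trans (dev 0 _); rewrite ?in_itv /= ?lexx ?ler01.
  by rewrite subrr normr0 mulr_ge0.
Qed.

Lemma reward_dev_le_sup (R : realType) (v1 v2 m1 m2 c : R) :
  v1 \in `[0, 1] -> v2 \in `[0, 1] -> c \in `[0, 1] ->
  `|reward c v2 m2 - reward c v1 m1| <=
    sup [set `|reward b v2 m2 - reward b v1 m1| | b in [set b : R | b \in `[0, 1]]].
Proof.
move=> v1_01 v2_01 c01; apply: ub_le_sup; last by exists c.
exists 2 => _ [b b01 <-]; apply: le_trans (ler_normB _ _) _.
have b01_in : b \in `[0, 1] by [].
by rewrite -[2]/(1 + 1 : R); apply: lerD; apply: norm_reward_le1.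
Qed.

Theorem proposition1 (R : realType) (v_prev v_t m_prev m_t : R) :
  v_prev \in `[0, 1] -> v_t \in `[0, 1] ->
  m_prev \in `[0, 1] -> m_t \in `[0, 1] ->
  `|m_t - m_prev| <=
    2 * sup [set `|reward b v_t m_t - reward b v_prev m_prev| | b in [set b : R | b \in `[0, 1]]].
Proof.
move=> v_prev01 v_t01 m_prev01 m_t01.
apply: reserve_gap_le m_prev01 m_t01 _ => b b01.
exact: reward_dev_le_sup.
Qed.
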